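(* In the SLAR setting, if $(\delta_u,u)$ and $(\delta_v,v)$ are both Nash equilibria of the SLAR game, then $u=v$.
   Context: SLAR setting: $(x,y)$ is drawn from a distribution $\mathcal D$ on $\mathbb R^d\times\{-1,+1\}$, $x=(x_1,\dots,x_d)$ with finite second moments, such that (A1) for each $i$ there is a constant $\mu_i$ with $\mathbb E[x_i\mid y]=y\mu_i$ for $y\in\{-1,1\}$, and (A2) the coordinates $x_1,\dots,x_d$ are mutually independent conditionally on $y$. Fix $\lambda>0$ and a perturbation budget $\varepsilon>0$; $\mathcal B(\varepsilon)=\{a\in\mathbb R^d:\|a\|_\infty\le\varepsilon\}$. A perturbation function is a measurable map $\delta$ assigning to each $(x,y)$ a vector $\delta(x,y)\in\mathcal B(\varepsilon)$. For a perturbation function $\delta$ and $w\in\mathbb R^d$ let $U(\delta,w)=\mathbb E_{(x,y)\sim\mathcal D}[\max(0,1-yw^\top(x+\delta(x,y)))]+\frac{\lambda}{2}\|w\|_2^2$. SLAR game: the adversary chooses a perturbation function $\delta$, the defender chooses $w\in\mathbb R^d$; the adversary's payoff is $U(\delta,w)$ and the defender's is $-U(\delta,w)$. A pair $(\delta^*,w^* )$ is a (pure) Nash equilibrium if $\sup_\delta U(\delta,w^* )\le U(\delta^*,w^* )\le\inf_{w\in\mathbb R^d}U(\delta^*,w)$, the supremum over all perturbation functions. *)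

From HB Require Import structures.
From mathcomp Require Import all_boot all_order all_algebra.
From mathcomp Require Import all_classical all_reals all_analysis.
Set Implicit Arguments. Unset Strict Implicit. Unset Printing Implicit Defensive.
Import Order.TTheory GRing.Theory Num.Theory.
Import numFieldNormedType.Exports.
Local Open Scope classical_set_scope.
Local Open Scope ring_scope.

(* The label y in {-1,+1} is encoded by a boolean b, y = slar_label b. *)
Definition slar_space (R : realType) (d : nat) := (d.-tuple R * bool)%type.

Definition slar_label (R : realType) (b : bool) : R := if b then 1 else -1.

Definition slar_x (R : realType) (d : nat) (i : 'I_d) (z : slar_space R d) : R :=
  tnth z.1 i.

Definition slar_y (R : realType) (d : nat) (z : slar_space R d) : R :=
  slar_label R z.2.

Definition tdot (R : realType) (d : nat) (w x : d.-tuple R) : R :=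
  \sum_(i < d) tnth w i * tnth x i.
Definition tnorm2 (R : realType) (d : nat) (w : d.-tuple R) : R :=
  \sum_(i < d) tnth w i ^+ 2.
Definition tadd (R : realType) (d : nat) (x a : d.-tuple R) : d.-tuple R :=
  [tuple tnth x i + tnth a i | i < d].

Definition finite_second_moments (R : realType) (d : nat)
    (D : probability (slar_space R d) R) : Prop :=
  forall i : 'I_d, D.-integrable setT (fun z => ((slar_x i z) ^+ 2)%:E).

(* (A1): E[x_i | y] = y mu_i.  Since y takes the two values -1, +1, the
   conditional expectation given y is characterised by its defining property
   on the generating events {y = b}: int_{y = b} x_i dD = (y-value) mu_i D(y = b). *)
Definition slar_A1 (R : realType) (d : nat)
    (D : probability (slar_space R d) R) : Prop :=
  forall i : 'I_d, exists mu : R, forall b : bool,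
    (\int[D]_(z in [set z : slar_space R d | z.2 = b]) (slar_x i z)%:E
      = (slar_label R b * mu)%:E * D [set z : slar_space R d | z.2 = b])%E.

(* (A2): x_1,...,x_d mutually independent conditionally on y:
   for each label value b of positive probability and all Borel sets A_i,
   D(x_i in A_i for all i | y = b) = prod_i D(x_i in A_i | y = b).
   (Sub-families are obtained by taking A_i = R.) *)
Definition slar_A2 (R : realType) (d : nat)
    (D : probability (slar_space R d) R) : Prop :=
  forall (b : bool) (A : 'I_d -> set R),
    (forall i, measurable (A i)) ->
    let pb := fine (D [set z : slar_space R d | z.2 = b]) in
    0 < pb ->
    fine (D [set z : slar_space R d | z.2 = b /\ forall i, A i (slar_x i z)]) / pb
    = \prod_(i < d)
        (fine (D [set z : slar_space R d | z.2 = b /\ A i (slar_x i z)]) / pb).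

Definition perturbation (R : realType) (d : nat) (eps : R)
    (delta : slar_space R d -> d.-tuple R) : Prop :=
  measurable_fun setT delta /\
  forall (z : slar_space R d) (i : 'I_d), `|tnth (delta z) i| <= eps.

Definition slar_hinge (R : realType) (d : nat)
    (delta : slar_space R d -> d.-tuple R) (w : d.-tuple R)
    (z : slar_space R d) : R :=
  Num.max 0 (1 - slar_y z * tdot w (tadd z.1 (delta z))).

Definition slar_U (R : realType) (d : nat) (D : probability (slar_space R d) R)
    (lam : R) (delta : slar_space R d -> d.-tuple R) (w : d.-tuple R) : \bar R :=
  (\int[D]_z (slar_hinge delta w z)%:E + (lam / 2 * tnorm2 w)%:E)%E.

Definition slar_nash (R : realType) (d : nat) (D : probability (slar_space R d) R)
    (lam eps : R) (delta0 : slar_space R d -> d.-tuple R) (w0 : d.-tuple R) : Prop :=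
  perturbation eps delta0 /\
  (ereal_sup [set slar_U D lam delta w0 | delta in perturbation eps]
     <= slar_U D lam delta0 w0)%E /\
  (slar_U D lam delta0 w0 <= ereal_inf [set slar_U D lam delta0 w | w in setT])%E.

From HB Require Import structures.
From mathcomp Require Import all_boot all_order all_algebra.
From mathcomp Require Import all_classical all_reals all_analysis.
From mathcomp Require Import measurable_realfun.
From mathcomp Require Import ring lra.
Set Implicit Arguments. Unset Strict Implicit. Unset Printing Implicit Defensive.
Import Order.TTheory GRing.Theory Num.Theory.
Local Open Scope classical_set_scope.
Local Open Scope ring_scope.

(* The saddle-point inequalities of the two equilibria chain into
   U(du, u) <= U(du, v) <= U(dv, v) <= U(dv, u) <= U(du, u), so u and v are
   both minimisers of w |-> U(du, w).  This function is the expected hinge loss,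
   which is convex in w, plus (lam/2) |w|^2, so it is lam-strongly convex and its
   (finite) minimum is attained only once: comparing with the midpoint of u and v
   gives (lam/4) |u - v|^2 <= 0.  The minimum is finite because U(du, 0) = 1. *)

Section TupleMidpoint.
Variables (R : realType) (d : nat).
Implicit Types u v x : d.-tuple R.

Definition tmid u v : d.-tuple R := [tuple (tnth u i + tnth v i) / 2 | i < d].

Lemma tdot_tmid u v x : 2 * tdot (tmid u v) x = tdot u x + tdot v x.
Proof.
rewrite /tdot mulr_sumr -big_split; apply: eq_bigr => i _.
by rewrite /tmid tnth_mktuple /=; field.
Qed.

Lemma tnorm2_tmid u v : 4 * tnorm2 (tmid u v) =
  2 * (tnorm2 u + tnorm2 v) - \sum_(i < d) (tnth u i - tnth v i) ^+ 2.
Proof.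
rewrite /tnorm2 mulr_sumr -big_split mulr_sumr -sumrB; apply: eq_bigr => i _.
by rewrite /tmid tnth_mktuple /=; field.
Qed.

Lemma tuple_eq_sum_sqr_subr_le0 u v :
  \sum_(i < d) (tnth u i - tnth v i) ^+ 2 <= 0 -> u = v.
Proof.
move=> S_le0; have S_eq0 : \sum_(i < d) (tnth u i - tnth v i) ^+ 2 = 0.
  by apply/le_anti; rewrite S_le0 sumr_ge0 // => i _; exact: sqr_ge0.
move/eqP: S_eq0; rewrite psumr_eq0 => [/allP uv|i _]; last exact: sqr_ge0.
apply: eq_from_tnth => i.
by have := uv i (mem_index_enum _); rewrite sqrf_eq0 subr_eq0 => /eqP.
Qed.

End TupleMidpoint.

Section StrongConvexity.
Variables (R : realType) (d : nat) (F : d.-tuple R -> \bar R) (lam : R).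
Hypotheses (lam_gt0 : 0 < lam) (F_ge0 : forall w, (0 <= F w)%E)
  (F_midconvex : forall u v, (2%:E * F (tmid u v) <= F u + F v)%E).

Definition penalized w : \bar R := (F w + (lam / 2 * tnorm2 w)%:E)%E.

Lemma penalized_minimizer_unique u v : penalized u \is a fin_num ->
  (penalized u <= penalized (tmid u v))%E -> penalized v = penalized u -> u = v.
Proof.
rewrite /penalized => Gu_fin u_min vu.
have := Gu_fin; rewrite fin_numD => /andP[Fu_fin _].
have := Gu_fin; rewrite -vu fin_numD => /andP[Fv_fin _].
have Fm_fin : F (tmid u v) \is a fin_num.
  rewrite ge0_fin_numE // -(@lte_pmul2l _ 2%:E) ?lte_fin // mulry gtr0_sg // mul1e.
  by apply: le_lt_trans (F_midconvex u v) _; rewrite ltey_eq fin_numD Fu_fin Fv_fin.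
have := F_midconvex u v; move: u_min vu.
rewrite -(fineK Fu_fin) -(fineK Fv_fin) -(fineK Fm_fin) -!EFinD -EFinM !lee_fin.
move=> u_min [vu] mid; have := tnorm2_tmid u v.
set S := \sum_(i < d) _ => norm_mid.
have S_ge0 : 0 <= S by rewrite sumr_ge0 // => i _; exact: sqr_ge0.
apply: tuple_eq_sum_sqr_subr_le0; rewrite -/S.
have : lam * S <= 0 by nra.
by rewrite pmulr_rle0.
Qed.

End StrongConvexity.

Lemma max0_midpoint (R : realDomainType) (p q r : R) : 2 * p = q + r ->
  2 * Num.max 0 p <= Num.max 0 q + Num.max 0 r.
Proof.
move=> e.
have q_le : q <= Num.max 0 q by rewrite le_max lexx orbT.
have r_le : r <= Num.max 0 r by rewrite le_max lexx orbT.
have q_ge0 : 0 <= Num.max 0 q by rewrite le_max lexx.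
have r_ge0 : 0 <= Num.max 0 r by rewrite le_max lexx.
by have [|] := lerP 0 p; lra.
Qed.

Section Hinge.
Variables (R : realType) (d : nat) (delta : slar_space R d -> d.-tuple R).

Lemma slar_hinge_ge0 w z : 0 <= slar_hinge delta w z.
Proof. by rewrite le_max lexx. Qed.

Lemma slar_hinge_tmid u v z :
  2 * slar_hinge delta (tmid u v) z <= slar_hinge delta u z + slar_hinge delta v z.
Proof.
apply: max0_midpoint; have := tdot_tmid u v (tadd z.1 (delta z)).
by rewrite mulrBr mulr1 mulrCA => ->; lra.
Qed.

Lemma slar_hinge0 z : slar_hinge delta [tuple of nseq d 0] z = 1.
Proof.
rewrite /slar_hinge /tdot big1 ?mulr0 ?subr0 ?max_r ?ler01 // => i _.
by rewrite tnth_nseq mul0r.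
Qed.

Lemma measurable_slar_hinge w : measurable_fun setT delta ->
  measurable_fun setT (slar_hinge delta w).
Proof.
move=> mdelta; apply: measurable_maxr; first exact: measurable_cst.
apply: measurable_funB; first exact: measurable_cst.
apply: measurable_funM.
  apply: measurable_fun_ifT; [exact: measurable_snd|exact: measurable_cst..].
apply: measurable_sum => i; apply: measurable_funM; first exact: measurable_cst.
rewrite (_ : (fun z => _) = (fun z => tnth z.1 i + tnth (delta z) i)); last first.
  by apply: funext => z; rewrite tnth_mktuple.
apply: measurable_funD; last exact: measurableT_comp (measurable_tnth i) mdelta.
exact: measurableT_comp (measurable_tnth i) measurable_fst.
Qed.

End Hinge.

Section Payoff.
Variables (R : realType) (d : nat) (D : probability (slar_space R d) R).
Variable delta : slar_space R d -> d.-tuple R.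
Hypothesis mdelta : measurable_fun setT delta.

Definition slar_risk w : \bar R := (\int[D]_z (slar_hinge delta w z)%:E)%E.

Lemma slar_risk_ge0 w : (0 <= slar_risk w)%E.
Proof. by apply: integral_ge0 => z _; rewrite lee_fin slar_hinge_ge0. Qed.

Lemma slar_risk_tmid u v :
  (2%:E * slar_risk (tmid u v) <= slar_risk u + slar_risk v)%E.
Proof.
have mh w := (measurable_EFinP _ _).2 (measurable_slar_hinge w mdelta).
have h_ge0 w z (_ : [set: slar_space R d] z) : (0 <= (slar_hinge delta w z)%:E)%E.
  by rewrite lee_fin slar_hinge_ge0.
rewrite /slar_risk -(ge0_integralZl_EFin _ _ (h_ge0 _) (mh _)) //.
rewrite -(ge0_integralD D measurableT (h_ge0 u) (mh u) (h_ge0 v) (mh v)).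
apply: ge0_le_integral => //.
- by move=> z _; rewrite mule_ge0 // lee_fin slar_hinge_ge0.
- exact: measurable_funeM (mh _).
- exact: emeasurable_funD (mh u) (mh v).
- by move=> z _; rewrite -EFinM -EFinD lee_fin slar_hinge_tmid.
Qed.

Lemma slar_U_penalized lam : slar_U D lam delta = penalized slar_risk lam.
Proof. by []. Qed.

Lemma slar_U0 lam : slar_U D lam delta [tuple of nseq d 0] = 1%E.
Proof.
rewrite /slar_U; under eq_integral do rewrite slar_hinge0.
rewrite integral_cst //= probability_setT mule1 /tnorm2 big1 ?mulr0 ?adde0 //.
by move=> i _; rewrite tnth_nseq expr0n.
Qed.

End Payoff.

Section Nash.
Variables (R : realType) (d : nat) (D : probability (slar_space R d) R) (lam eps : R).
Implicit Types (delta : slar_space R d -> d.-tuple R) (w : d.-tuple R).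

Lemma slar_nash_minimizer delta0 w0 w : slar_nash D lam eps delta0 w0 ->
  (slar_U D lam delta0 w0 <= slar_U D lam delta0 w)%E.
Proof. by case=> _ [_ /le_trans]; apply; apply: ereal_inf_lbound; exists w. Qed.

Lemma slar_nash_maximizer delta0 w0 delta : slar_nash D lam eps delta0 w0 ->
  perturbation eps delta -> (slar_U D lam delta w0 <= slar_U D lam delta0 w0)%E.
Proof. by case=> _ [+ _] pdelta; apply: le_trans; apply: ereal_sup_ubound; exists delta. Qed.

Lemma slar_nash_swap delta_u u delta_v v :
  slar_nash D lam eps delta_u u -> slar_nash D lam eps delta_v v ->
  slar_U D lam delta_u v = slar_U D lam delta_u u.
Proof.
move=> Nu Nv; apply/le_anti; rewrite (slar_nash_minimizer v Nu) andbT.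
apply: le_trans (slar_nash_maximizer Nv Nu.1) _.
apply: le_trans (slar_nash_minimizer u Nv) _.
exact: slar_nash_maximizer Nu Nv.1.
Qed.

Lemma slar_nash_fin_num delta0 w0 : 0 <= lam ->
  slar_nash D lam eps delta0 w0 -> slar_U D lam delta0 w0 \is a fin_num.
Proof.
move=> lam_ge0 N; rewrite ge0_fin_numE; last first.
  rewrite slar_U_penalized /penalized adde_ge0 ?slar_risk_ge0 // lee_fin.
  by rewrite mulr_ge0 ?divr_ge0 // /tnorm2 sumr_ge0 // => i _; exact: sqr_ge0.
apply: le_lt_trans (slar_nash_minimizer [tuple of nseq d 0] N) _.
by rewrite slar_U0 ltry.
Qed.

End Nash.

Theorem mainTheorem15 (R : realType) (d : nat)
    (D : probability (slar_space R d) R) (lam eps : R)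
    (hlam : 0 < lam) (heps : 0 < eps)
    (hmom : finite_second_moments D) (hA1 : slar_A1 D) (hA2 : slar_A2 D)
    (delta_u delta_v : slar_space R d -> d.-tuple R) (u v : d.-tuple R) :
  slar_nash D lam eps delta_u u -> slar_nash D lam eps delta_v v -> u = v.
Proof.
move=> Nu Nv.
apply: (penalized_minimizer_unique hlam (@slar_risk_ge0 _ _ D delta_u)
          (slar_risk_tmid D Nu.1.1)).
- exact: slar_nash_fin_num (ltW hlam) Nu.
- exact: slar_nash_minimizer (tmid u v) Nu.
- exact: slar_nash_swap Nu Nv.
Qed.
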